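(* Let $F\colon \mathsf{Set}\to\mathsf{Set}$ be a functor preserving intersections, and let $I$ be a set. Then an $I$-pointed $F$-coalgebra $(C,c,i_C)$ is reachable if and only if its canonical graph $(C,\tau_C\cdot c,i_C)$, regarded as an $I$-pointed $\mathcal{P}$-coalgebra, is reachable.
   Context: $\mathcal P$ denotes the power-set functor on $\mathsf{Set}$. On $\mathsf{Set}$ we use the factorization system (surjective maps, injective maps); subobjects and subcoalgebras are taken w.r.t. injective maps. An $I$-pointed $F$-coalgebra is a triple $(C,c,i_C)$ with $c\colon C\to FC$ and $i_C\colon I\to C$; a homomorphism $h\colon (C,c,i_C)\to(D,d,i_D)$ is a map $h\colon C\to D$ with $d\cdot h=Fh\cdot c$ and $h\cdot i_C=i_D$. A subcoalgebra is such a homomorphism that is injective. An $I$-pointed coalgebra is reachable if every subcoalgebra of it (every injective homomorphism of $I$-pointed coalgebras into it) is an isomorphism. $F$ preserves intersections means $F$ preserves injective maps and wide pullbacks (intersections) of families of injective maps with common codomain. For each set $X$, $\tau_X\colon FX\to\mathcal P X$ is defined by $\tau_X(t)=\{x\in X\mid t \text{ is not in the image of } F i\colon F(X\setminus\{x\})\to FX\}$, where $i\colon X\setminus\{x\}\hookrightarrow X$ is the inclusion. The canonical graph of $(C,c)$ is the $\mathcal P$-coalgebra $\tau_C\cdot c\colon C\to \mathcal P C$, pointed by the same $i_C$. *)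

Set Implicit Arguments.

Record SetFunctor := {
  Fobj :> Type -> Type;
  fmap : forall X Y : Type, (X -> Y) -> Fobj X -> Fobj Y;
  fmap_id : forall X (t : Fobj X), fmap (fun x : X => x) t = t;
  fmap_comp : forall X Y Z (f : X -> Y) (g : Y -> Z) (t : Fobj X),
      fmap (fun x => g (f x)) t = fmap g (fmap f t)
}.

Definition injective {A B : Type} (f : A -> B) := forall x y, f x = f y -> x = y.

Definition is_wide_pullback {J X P : Type} {A : J -> Type}
    (m : forall j, A j -> X) (p : forall j, P -> A j) (q : P -> X) : Prop :=
  (forall j x, m j (p j x) = q x) /\
  forall (Q : Type) (r : forall j, Q -> A j) (s : Q -> X),
    (forall j y, m j (r j y) = s y) ->
    exists u : Q -> P,
      ((forall j y, p j (u y) = r j y) /\ (forall y, q (u y) = s y)) /\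
      forall u' : Q -> P,
        ((forall j y, p j (u' y) = r j y) /\ (forall y, q (u' y) = s y)) ->
        forall y, u' y = u y.

Definition preserves_intersections (F : SetFunctor) : Prop :=
  (forall X Y (m : X -> Y), injective m -> injective (fmap F m)) /\
  (forall (J X P : Type) (A : J -> Type) (m : forall j, A j -> X)
          (p : forall j, P -> A j) (q : P -> X),
     (forall j, injective (m j)) ->
     is_wide_pullback m p q ->
     is_wide_pullback (fun j => fmap F (m j)) (fun j => fmap F (p j)) (fmap F q)).

Definition Pow (X : Type) : Type := X -> Prop.
Definition Pmap (X Y : Type) (f : X -> Y) (S : Pow X) : Pow Y :=
  fun y => exists x, S x /\ f x = y.

Definition pt_hom {G : Type -> Type} (gmap : forall X Y : Type, (X -> Y) -> G X -> G Y)
    {I C D : Type} (c : C -> G C) (iC : I -> C) (d : D -> G D) (iD : I -> D)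
    (h : C -> D) : Prop :=
  (forall x, d (h x) = gmap C D h (c x)) /\ (forall i, h (iC i) = iD i).

Definition reachable {G : Type -> Type} (gmap : forall X Y : Type, (X -> Y) -> G X -> G Y)
    {I C : Type} (c : C -> G C) (iC : I -> C) : Prop :=
  forall (D : Type) (d : D -> G D) (iD : I -> D) (h : D -> C),
    injective h -> pt_hom gmap d iD c iC h ->
    exists g : C -> D, pt_hom gmap c iC d iD g /\
      (forall x, g (h x) = x) /\ (forall y, h (g y) = y).

Definition tau (F : SetFunctor) (X : Type) (t : F X) : Pow X :=
  fun x => ~ exists s : F {y : X | y <> x}, fmap F (@proj1_sig X _) s = t.

From Stdlib Require Import Classical ClassicalEpsilon FunctionalExtensionality
  PropExtensionality ProofIrrelevance.

(* A subset S of a coalgebra C is the carrier of a subcoalgebra exactly when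
   every c x with x in S already lies in F S, and the reachable coalgebras are
   those with no proper such subset containing the points.  For the power-set
   functor, T lies in P S iff T is contained in S; for an intersection
   preserving F, t lies in F S iff tau t is contained in S, because the subsets
   S with t in F S are closed under intersections and tau t is the least of
   them.  Hence C and its canonical graph have the same subcoalgebra carriers. *)

Lemma proj1_sig_injective {A : Type} {P : A -> Prop} : injective (@proj1_sig A P).
Proof. exact (eq_sig_hprop (fun x => proof_irrelevance (P x))). Qed.

Definition lies_in (F : SetFunctor) {X : Type} (S : X -> Prop) (t : F X) : Prop :=
  exists s : F (sig S), fmap F (@proj1_sig X S) s = t.

Lemma lies_in_mono (F : SetFunctor) {X : Type} (R S : X -> Prop) (t : F X) :
  (forall x, R x -> S x) -> lies_in F R t -> lies_in F S t.
Proof.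
  intros RS [s <-].
  exists (fmap F (fun y : sig R => exist S (proj1_sig y) (RS _ (proj2_sig y))) s).
  now rewrite <- fmap_comp.
Qed.

Section Reachability.

Context (F : SetFunctor) {I C : Type} (c : C -> F C) (iC : I -> C).

Definition closed_subset (S : C -> Prop) : Prop :=
  (forall i, S (iC i)) /\ (forall x, S x -> lies_in F S (c x)).

Lemma reachable_closed_subset_full (S : C -> Prop) :
  reachable (fmap F) c iC -> closed_subset S -> forall x, S x.
Proof.
  intros Hreach [S_pts S_closed] x.
  destruct (choice (fun (y : sig S) s => fmap F (@proj1_sig C S) s = c (proj1_sig y)))
    as [d Hd].
  { intros y. exact (S_closed _ (proj2_sig y)). }
  destruct (Hreach (sig S) d (fun i => exist S (iC i) (S_pts i)) (@proj1_sig C S))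
    as [g [_ [_ proj_g]]].
  - apply proj1_sig_injective.
  - split; [symmetry; apply Hd | reflexivity].
  - rewrite <- (proj_g x). apply proj2_sig.
Qed.

Lemma hom_image_closed {D : Type} (d : D -> F D) (iD : I -> D) (h : D -> C) :
  pt_hom (fmap F) d iD c iC h -> closed_subset (fun x => exists y, h y = x).
Proof.
  intros [h_hom h_pts]. split.
  - intros i. exists (iD i). apply h_pts.
  - intros x [y <-].
    exists (fmap F (fun z => exist (fun x => exists y, h y = x) (h z) (ex_intro _ z eq_refl))
              (d y)).
    now rewrite <- fmap_comp, h_hom.
Qed.

Lemma bijective_hom_inverse {D : Type} (d : D -> F D) (iD : I -> D) (h : D -> C) :
  injective h -> (forall x, exists y, h y = x) -> pt_hom (fmap F) d iD c iC h ->
  exists g : C -> D, pt_hom (fmap F) c iC d iD g /\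
    (forall y, g (h y) = y) /\ (forall x, h (g x) = x).
Proof.
  intros h_inj h_surj [h_hom h_pts].
  destruct (choice (fun x y => h y = x) h_surj) as [g hg].
  assert (gh : forall y, g (h y) = y) by (intros y; apply h_inj, hg).
  exists g. split; [split | split; assumption].
  - intros x. rewrite <- (hg x) at 2.
    rewrite h_hom, <- fmap_comp.
    replace (fun y => g (h y)) with (fun y : D => y) by (extensionality y; now rewrite gh).
    now rewrite fmap_id.
  - intros i. apply h_inj. now rewrite hg, h_pts.
Qed.

Lemma reachable_iff_closed_subset_full :
  reachable (fmap F) c iC <-> (forall S, closed_subset S -> forall x, S x).
Proof.
  split.
  - intros Hreach S. now apply reachable_closed_subset_full.
  - intros Hfull D d iD h h_inj h_hom.
    apply bijective_hom_inverse; try assumption.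
    apply Hfull. now apply hom_image_closed with d iD.
Qed.

End Reachability.

Lemma intersection_wide_pullback {J C : Type} (R : J -> C -> Prop) :
  is_wide_pullback (fun j (a : sig (R j)) => proj1_sig a)
    (fun j (x : {x | forall j, R j x}) => exist (R j) (proj1_sig x) (proj2_sig x j))
    (@proj1_sig C _).
Proof.
  split; [reflexivity |].
  intros Q r s rs.
  assert (s_in : forall y j, R j (s y)) by (intros y j; rewrite <- (rs j y); apply proj2_sig).
  exists (fun y => exist (fun x => forall j, R j x) (s y) (s_in y)).
  split; [split |].
  - intros j y. apply proj1_sig_injective. symmetry. apply rs.
  - reflexivity.
  - intros u' [_ u's] y. apply proj1_sig_injective. apply u's.
Qed.

Lemma lies_in_intersection (F : SetFunctor) (HF : preserves_intersections F)
    {J C : Type} (R : J -> C -> Prop) (t : F C) :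
  (forall j, lies_in F (R j) t) -> lies_in F (fun x => forall j, R j x) t.
Proof.
  intros t_in.
  pose (s := fun j => proj1_sig (constructive_indefinite_description _ (t_in j))).
  destruct (proj2 HF _ _ _ _ _ _ _ (fun j => proj1_sig_injective)
              (intersection_wide_pullback R)) as [_ universal].
  destruct (universal unit (fun j _ => s j) (fun _ => t)) as [u [[_ u_t] _]].
  - intros j _. exact (proj2_sig (constructive_indefinite_description _ (t_in j))).
  - exists (u tt). apply u_t.
Qed.

Section Tau.

Context (F : SetFunctor) {C : Type}.

Lemma tau_sub_of_lies_in (S : C -> Prop) (t : F C) :
  lies_in F S t -> forall x, tau F t x -> S x.
Proof.
  intros t_in x x_tau. apply NNPP. intros x_notin.
  apply x_tau. apply (lies_in_mono _ S); [| assumption].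
  intros y y_in ->. contradiction.
Qed.

(* tau t contains the intersection of all S with t in F S, since
   x outside tau t means that t lies in F (C \ {x}). *)
Lemma lies_in_tau (HF : preserves_intersections F) (t : F C) : lies_in F (tau F t) t.
Proof.
  apply (lies_in_mono _ (fun x => forall R : {R | lies_in F R t}, proj1_sig R x)).
  - intros x x_in t_away.
    exact (x_in (exist _ (fun y => y <> x) t_away) eq_refl).
  - apply lies_in_intersection; [assumption |].
    intros R. apply proj2_sig.
Qed.

Lemma lies_in_iff_tau_sub (HF : preserves_intersections F) (S : C -> Prop) (t : F C) :
  lies_in F S t <-> (forall x, tau F t x -> S x).
Proof.
  split.
  - apply tau_sub_of_lies_in.
  - intros tau_S. apply (lies_in_mono _ (tau F t)); [assumption | now apply lies_in_tau].
Qed.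

End Tau.

Definition PowF : SetFunctor.
Proof.
  refine {| Fobj := Pow; fmap := Pmap |}.
  - intros X T. extensionality x. apply propositional_extensionality.
    split; [intros [y [Ty <-]]; exact Ty | intros Tx; exists x; auto].
  - intros X Y Z f g T. extensionality z. apply propositional_extensionality.
    split.
    + intros [x [Tx <-]]. exists (f x). split; [exists x |]; auto.
    + intros [y [[x [Tx <-]] <-]]. exists x. auto.
Defined.

Lemma Pow_lies_in_iff {X : Type} (S : X -> Prop) (T : Pow X) :
  lies_in PowF S T <-> (forall x, T x -> S x).
Proof.
  split.
  - intros [s <-] x [y [_ <-]]. apply proj2_sig.
  - intros T_S. exists (fun y => T (proj1_sig y)).
    extensionality x. apply propositional_extensionality.
    split; [intros [y [Ty <-]]; exact Ty | intros Tx; now exists (exist S x (T_S x Tx))].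
Qed.

Lemma closed_subset_canonical_graph (F : SetFunctor) (HF : preserves_intersections F)
    (I C : Type) (c : C -> F C) (iC : I -> C) (S : C -> Prop) :
  closed_subset F c iC S <-> closed_subset PowF (fun x => tau F (c x)) iC S.
Proof.
  unfold closed_subset.
  setoid_rewrite Pow_lies_in_iff.
  setoid_rewrite (lies_in_iff_tau_sub _ HF).
  reflexivity.
Qed.

Theorem theorem4p5 (F : SetFunctor) (HF : preserves_intersections F)
  (I C : Type) (c : C -> F C) (iC : I -> C) :
  reachable (fmap F) c iC <-> reachable Pmap (fun x => tau F (c x)) iC.
Proof.
  change (reachable (fmap F) c iC <-> reachable (fmap PowF) (fun x => tau F (c x)) iC).
  rewrite !reachable_iff_closed_subset_full.
  split; intros Hfull S HS; apply Hfull, (closed_subset_canonical_graph _ HF), HS.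
Qed.
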